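(* For all integers $1\le r\le n$, $m(n,r)\le m(n,r-1)\,p(n,r)$.
   Context: $m(n,r)$ denotes the number of matroids of rank $r$ on the ground set $[n]=\{1,\dots,n\}$, and $p(n,r)$ the number of paving matroids of rank $r$ on $[n]$ (rank-$r$ matroids all of whose circuits have at least $r$ elements). *)

(* A matroid on the ground set [n] is represented by its
   family of bases, a set of subsets of 'I_n (the ordinals 0..n-1 stand for
   the elements 1..n). *)
From mathcomp Require Import all_boot.
Set Implicit Arguments. Unset Strict Implicit. Unset Printing Implicit Defensive.

Definition is_matroid_bases (n : nat) (B : {set {set 'I_n}}) : bool :=
  (B != set0) &&
  [forall B1 in B, forall B2 in B, forall x in B1 :\: B2,
     exists y in B2 :\: B1, (y |: (B1 :\ x)) \in B].

Definition has_rank (n : nat) (B : {set {set 'I_n}}) (r : nat) : bool :=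
  [forall X in B, #|X| == r].

Definition indep (n : nat) (B : {set {set 'I_n}}) (I : {set 'I_n}) : bool :=
  [exists X in B, I \subset X].

Definition circuit (n : nat) (B : {set {set 'I_n}}) (C : {set 'I_n}) : bool :=
  ~~ indep B C && [forall D : {set 'I_n}, (D \proper C) ==> indep B D].

Definition paving (n : nat) (B : {set {set 'I_n}}) (r : nat) : bool :=
  [forall C : {set 'I_n}, circuit B C ==> (r <= #|C|)].

Definition m_count (n r : nat) : nat :=
  #|[set B : {set {set 'I_n}} | is_matroid_bases B && has_rank B r]|.

Definition p_count (n r : nat) : nat :=
  #|[set B : {set {set 'I_n}} | [&& is_matroid_bases B, has_rank B r & paving B r]]|.

From mathcomp Require Import all_boot zify.
Set Implicit Arguments. Unset Strict Implicit. Unset Printing Implicit Defensive.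

(* A matroid M of rank r = k+1 is determined by its truncation T(M) to rank k
   together with a paving matroid P(M) of rank r, so M |-> (T(M), P(M)) is
   injective.  In each hyperplane spanned by k independent elements choose a
   largest subset all of whose k-subsets are independent: the blocks of M.
   Since a k-set lies in at most one block and no block is the whole ground
   set, the r-sets contained in no block are the bases of a paving matroid
   P(M), and every basis of M is one of them.  If M1 and M2 share T and P but
   X is a basis of M1 only, pick x in X: the block G of M2 in the hyperplane
   spanned by X - x contains no basis of M1, yet the maximality of G, and the
   agreement of M1 and M2 on sets of size at most k, make G span that whole
   hyperplane, hence X, in M1. *)

Lemma exists_subset_card (T : finType) (J X : {set T}) k :
  J \subset X -> #|J| <= k <= #|X| ->
  exists2 Y : {set T}, (J \subset Y) && (Y \subset X) & #|Y| = k.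
Proof.
move=> sJX /andP[leJk lekX].
have /card_geqP[s [uniq_s size_s sub_s]] : k - #|J| <= #|X :\: J|.
  by rewrite cardsD (setIidPr sJX); lia.
have sJs : [set:: s] \subset X :\: J by apply/subsetP => x; rewrite inE => /sub_s.
exists (J :|: [set:: s]).
  by rewrite subsetUl subUset sJX (subset_trans sJs) ?subsetDl.
rewrite cardsU (_ : J :&: _ = set0) ?cards0; last first.
  apply/setP => x; rewrite in_setI in_set0; apply/negP => /andP[xJ xs].
  by have := subsetP sJs x xs; rewrite inE xJ.
by rewrite cardsE (card_uniqP uniq_s) size_s; lia.
Qed.

Definition truncation n (B : {set {set 'I_n}}) k :=
  [set X : {set 'I_n} | indep B X && (#|X| == k)].

Section Bases.
Variables (n r : nat) (B : {set {set 'I_n}}).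
Hypotheses (matB : is_matroid_bases B) (rankB : has_rank B r).
Implicit Types (G I J W X : {set 'I_n}).

Lemma basis_exchange X1 X2 x : X1 \in B -> X2 \in B -> x \in X1 :\: X2 ->
  exists2 y, y \in X2 :\: X1 & y |: (X1 :\ x) \in B.
Proof.
case/andP: matB => _ /forall_inP exB /exB /forall_inP exB1 /exB1 /forall_inP exB12.
by move=> /exB12 /exists_inP[y]; exists y.
Qed.

Lemma card_basis X : X \in B -> #|X| = r.
Proof. by move: rankB => /forall_inP rB /rB /eqP. Qed.

Lemma card_basisD X1 X2 : X1 \in B -> X2 \in B -> #|X1 :\: X2| = #|X2 :\: X1|.
Proof. by move=> X1B X2B; rewrite !cardsD (card_basis X1B) (card_basis X2B) setIC. Qed.

Lemma basis_indep X : X \in B -> indep B X.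
Proof. by move=> XB; apply/exists_inP; exists X. Qed.

Lemma indepS I J : J \subset I -> indep B I -> indep B J.
Proof.
by move=> sJI /exists_inP[X XB sIX]; apply/exists_inP; exists X => //; apply: subset_trans sIX.
Qed.

Lemma indep0 : indep B set0.
Proof. by case/andP: matB => /set0Pn[X /basis_indep iX] _; apply: indepS (sub0set X) iX. Qed.

Lemma indep_card I : indep B I -> #|I| <= r.
Proof. by case/exists_inP=> X XB sIX; rewrite -(card_basis XB) subset_leq_card. Qed.

Lemma indep_card_basis I : indep B I -> #|I| = r -> I \in B.
Proof.
case/exists_inP=> X XB sIX cardI.
by have /eqP-> : I == X by rewrite eqEcard sIX cardI (card_basis XB) leqnn.
Qed.

(* Trade the elements of [X0 :\: (I :|: X1)] one at a time for elements of [X1]. *)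
Lemma basis_between I X0 X1 : X0 \in B -> X1 \in B -> I \subset X0 ->
  exists2 X, X \in B & (I \subset X) && (X \subset I :|: X1).
Proof.
move: {2}#|X0 :\: (I :|: X1)| (leqnn #|X0 :\: (I :|: X1)|) => d.
elim: d X0 => [|d IHd] X0 le_d X0B X1B sIX0.
  by exists X0; rewrite // sIX0 -setD_eq0 -cards_eq0 -leqn0.
have [D0|/set0Pn[x xD]] := eqVneq (X0 :\: (I :|: X1)) set0.
  by exists X0; rewrite // sIX0 -setD_eq0 D0 eqxx.
move: (xD); rewrite !inE negb_or => /andP[/andP[xI xX1] xX0].
have xX0X1 : x \in X0 :\: X1 by rewrite inE xX1.
have [y] := basis_exchange X0B X1B xX0X1.
rewrite inE => /andP[yX0 yX1] X'B; apply: IHd X'B X1B _; last first.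
  apply/subsetP => z zI; rewrite !inE (subsetP sIX0) // andbT orbC.
  by apply/orP; left; apply: contraNneq xI => <-.
rewrite -ltnS (leq_trans _ le_d) // proper_card //; apply/properP; split.
  apply/subsetP => z; rewrite !inE negb_or => /andP[/andP[zI zX1]].
  case/orP=> [/eqP zy|/andP[_ ->]]; last by rewrite zI zX1.
  by rewrite zy yX1 in zX1.
have xy : x != y by apply: contraNneq yX0 => <-.
by exists x => //; rewrite !inE eqxx (negbTE xy) andbF.
Qed.

Lemma indep_augment I J : indep B I -> indep B J -> #|I| < #|J| ->
  exists2 e, e \in J :\: I & indep B (e |: I).
Proof.
move=> /exists_inP[X0 X0B sIX0] /exists_inP[XJ XJB sJXJ] ltIJ.
have [X XB /andP[sIX sXIXJ]] := basis_between X0B XJB sIX0.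
have [JIX0|/set0Pn[e]] := eqVneq ((J :\: I) :&: X) set0.
  have sJI : J :\: I \subset XJ :\: X.
    apply/subsetP => z zJI; have /setDP[zJ _] := zJI.
    rewrite inE (subsetP sJXJ z zJ) andbT; apply/negP => zX.
    by have := in_set0 z; rewrite -JIX0 in_setI zJI zX.
  have sXI : X :\: XJ \subset I :\: J.
    apply/subsetP => z /setDP[zX zXJ]; have := subsetP sXIXJ z zX.
    rewrite in_setU (negbTE zXJ) orbF => zI; rewrite inE zI andbT.
    by apply: contraNN zXJ => /(subsetP sJXJ).
  suff : #|J| <= #|I| by rewrite leqNgt ltIJ.
  rewrite -(cardsID I J) -(cardsID J I) (setIC J I) leq_add2l.
  by rewrite (leq_trans (subset_leq_card sJI)) // card_basisD // subset_leq_card.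
rewrite inE => /andP[eJI eX]; exists e => //; apply/exists_inP; exists X => //.
by rewrite subUset sub1set eX.
Qed.

Lemma max_indep_between J G : J \subset G -> indep B J ->
  exists2 W : {set 'I_n}, [&& J \subset W, W \subset G & indep B W] &
    forall W', J \subset W' -> W' \subset G -> indep B W' -> #|W'| <= #|W|.
Proof.
move=> sJG iJ; pose P (W : {set 'I_n}) := [&& J \subset W, W \subset G & indep B W].
have PJ : P J by rewrite /P subxx sJG iJ.
case: (arg_maxnP (fun W : {set 'I_n} => #|W|) PJ) => W PW maxW.
by exists W => // W' sJW' sW'G iW'; apply: maxW; rewrite /P sJW' sW'G iW'.
Qed.

(* [e] lies in the closure of [J], hence in that of [G], which [W] spans. *)
Lemma dep_setU1_max G W J e : W \subset G -> indep B W ->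
  (forall W', W' \subset G -> indep B W' -> #|W'| <= #|W|) ->
  J \subset G -> indep B J -> ~~ indep B (e |: J) -> e \notin W -> ~~ indep B (e |: W).
Proof.
move=> sWG iW maxW sJG iJ depJe eW; apply/negP => iWe.
have [Y /and3P[sJY sYG iY] maxY] := max_indep_between sJG iJ.
have ltYWe : #|Y| < #|e |: W| by rewrite cardsU1 eW ltnS maxW.
have [f /setDP[fWe fY] iYf] := indep_augment iY iWe ltYWe.
case/setU1P: fWe => [fe | fW].
  by move: depJe; rewrite -fe (indepS _ iYf) // setUS.
have sYfG : f |: Y \subset G by rewrite subUset sub1set (subsetP sWG f fW) sYG.
have := maxY _ (subset_trans sJY (subsetUr _ _)) sYfG iYf.
by rewrite cardsU1 fY /= ltnn.
Qed.

Lemma indep_truncation k J : k <= r -> #|J| <= k -> indep (truncation B k) J = indep B J.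
Proof.
move=> lekr leJk; apply/idP/idP => [/exists_inP[Y] | /exists_inP[X XB sJX]].
  by rewrite inE => /andP[iY _] sJY; apply: indepS sJY iY.
have [Y /andP[sJY sYX] cardY] :
    exists2 Y : {set 'I_n}, (J \subset Y) && (Y \subset X) & #|Y| = k.
  by apply: exists_subset_card; rewrite // leJk (card_basis XB).
apply/exists_inP; exists Y => //.
by rewrite inE cardY eqxx andbT (indepS sYX (basis_indep XB)).
Qed.

Lemma truncation_bases k : k <= r -> is_matroid_bases (truncation B k).
Proof.
move=> lekr; apply/andP; split.
  have /exists_inP[X XT _] : indep (truncation B k) set0.
    by rewrite indep_truncation ?cards0 // indep0.
  by apply/set0Pn; exists X.
apply/forall_inP => X1; rewrite inE => /andP[iX1 /eqP cX1].
apply/forall_inP => X2; rewrite inE => /andP[iX2 /eqP cX2].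
apply/forall_inP => x /setDP[xX1 xX2].
have cX1x := cardsD1 x X1; rewrite xX1 cX1 /= in cX1x.
have [|y /setDP[yX2 yX1x] iy] := indep_augment (indepS (subD1set X1 x) iX1) iX2.
  by rewrite cX2 cX1x add1n ltnSn.
have yx : y != x by apply: contraNneq xX2 => <-.
move: yX1x; rewrite in_setD1 yx /= => yX1.
apply/exists_inP; exists y; first by rewrite inE yX1 yX2.
by rewrite inE iy cardsU1 in_setD1 yx yX1 /= cX1x eqxx.
Qed.

End Bases.

Definition avoid_blocks n k (blk : pred {set 'I_n}) :=
  [set X : {set 'I_n} | (#|X| == k.+1) && [forall K, blk K ==> ~~ (X \subset K)]].

Section AvoidBlocks.
Variables (n k : nat) (blk : pred {set 'I_n}).
Hypotheses (blk_unique : forall K1 K2 S : {set 'I_n}, blk K1 -> blk K2 ->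
              S \subset K1 -> S \subset K2 -> #|S| = k -> K1 = K2)
           (blk_proper : forall K, blk K -> K \proper setT)
           (lt_k_n : k < n).
Implicit Types (D K S X : {set 'I_n}).

Lemma avoid_blocksP X : reflect (#|X| = k.+1 /\ forall K, blk K -> ~~ (X \subset K))
  (X \in avoid_blocks k blk).
Proof. by rewrite inE; apply: (iffP andP) => -[/eqP cX /forall_inP bX] //; rewrite cX. Qed.

Lemma avoid_blocks_rank : has_rank (avoid_blocks k blk) k.+1.
Proof. by apply/forall_inP => X /avoid_blocksP[/eqP]. Qed.

Lemma setU1_avoid_blocks S e : #|S| = k -> e \notin S ->
  (forall K, blk K -> S \subset K -> e \notin K) -> e |: S \in avoid_blocks k blk.
Proof.
move=> cS eS eK; apply/avoid_blocksP; split; first by rewrite cardsU1 eS cS.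
move=> K bK; rewrite subUset sub1set; apply/negP => /andP[eK' sSK].
by move: (eK K bK sSK); rewrite eK'.
Qed.

Lemma indep_avoid_blocks D : #|D| <= k -> indep (avoid_blocks k blk) D.
Proof.
move=> leDk.
have [S /andP[sDS _] cS] :
    exists2 S : {set 'I_n}, (D \subset S) && (S \subset setT) & #|S| = k.
  by apply: exists_subset_card; rewrite ?subsetT // leDk cardsT card_ord ltnW.
suff [e eSA] : exists e, e |: S \in avoid_blocks k blk.
  by apply/exists_inP; exists (e |: S); rewrite // (subset_trans sDS) ?subsetUr.
case: (pickP (fun K => blk K && (S \subset K))) => [K /andP[bK sSK] | noK].
  have /properP[_ [e _ eK]] := blk_proper bK.
  exists e; apply: setU1_avoid_blocks => //; first by apply: contraNN eK => /(subsetP sSK).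
  by move=> K' bK' sSK'; rewrite (blk_unique bK' bK sSK' sSK cS).
have /properP[_ [e _ eS]] : S \proper setT.
  by rewrite properEcard subsetT cardsT card_ord cS.
exists e; apply: setU1_avoid_blocks => // K bK sSK.
by have := noK K; rewrite bK sSK.
Qed.

Lemma avoid_blocks_paving : paving (avoid_blocks k blk) k.+1.
Proof.
apply/forallP => C; apply/implyP => /andP[depC _]; rewrite leqNgt ltnS.
by apply: contra depC; apply: indep_avoid_blocks.
Qed.

Lemma avoid_blocks_bases : is_matroid_bases (avoid_blocks k blk).
Proof.
apply/andP; split.
  have /exists_inP[X XA _] : indep (avoid_blocks k blk) set0.
    by apply: indep_avoid_blocks; rewrite cards0.
  by apply/set0Pn; exists X.
apply/forall_inP => X1 /avoid_blocksP[cX1 _]; apply/forall_inP => X2 /avoid_blocksP[cX2 X2K].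
apply/forall_inP => x /setDP[xX1 xX2]; apply: contraT => /exists_inPn noY.
have cS : #|X1 :\ x| = k by have := cardsD1 x X1; rewrite xX1 cX1 add1n => -[].
have blkY y : y \in X2 :\: X1 -> exists2 K, blk K & y |: (X1 :\ x) \subset K.
  move=> yX; have /setDP[_ yX1] := yX.
  have yS : y \notin X1 :\ x by rewrite in_setD1 (negbTE yX1) andbF.
  have := noY y yX; rewrite inE cardsU1 yS cS eqxx /= negb_forall_in.
  by case/exists_inP => K bK /negPn sK; exists K.
have /card_gt0P[y0 y0X] : 0 < #|X2 :\: X1|.
  rewrite cardsD cX2 -cX1 setIC -cardsD; apply/card_gt0P; exists x.
  by rewrite inE xX1 xX2.
have [K bK sK] := blkY y0 y0X.
have sSK : X1 :\ x \subset K := subset_trans (subsetUr _ _) sK.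
suff sX2K : X2 \subset K by have := X2K K bK; rewrite sX2K.
apply/subsetP => z zX2; have [zX1 | zX1] := boolP (z \in X1).
  apply: (subsetP sSK); rewrite in_setD1 zX1 andbT.
  by apply: contraNneq xX2 => <-.
have zX : z \in X2 :\: X1 by rewrite inE zX1.
have [Kz bKz sKz] := blkY z zX.
rewrite (blk_unique bK bKz sSK (subset_trans (subsetUr _ _) sKz) cS).
by apply: (subsetP sKz); rewrite setU11.
Qed.

End AvoidBlocks.

Lemma truncation_rank n (B : {set {set 'I_n}}) k : has_rank (truncation B k) k.
Proof. by apply/forall_inP => X; rewrite inE => /andP[]. Qed.

(* The closure of [S] when [S] is independent. *)
Definition span n (B : {set {set 'I_n}}) (S : {set 'I_n}) :=
  [set e | (e \in S) || ~~ indep B (e |: S)].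

Definition generic n (B : {set {set 'I_n}}) k (G : {set 'I_n}) :=
  [forall J : {set 'I_n}, (J \subset G) ==> (#|J| <= k) ==> indep B J].

Definition core n (B : {set {set 'I_n}}) k (H : {set 'I_n}) :=
  [arg max_(G > set0 | generic B k G && (G \subset H)) #|G|].

Definition block n (B : {set {set 'I_n}}) k (K : {set 'I_n}) :=
  [exists S : {set 'I_n}, [&& indep B S, #|S| == k & K == core B k (span B S)]].

Definition paving_of n (B : {set {set 'I_n}}) k := avoid_blocks k (block B k).

Section Hyperplanes.
Variables (n k : nat) (B : {set {set 'I_n}}).
Hypotheses (matB : is_matroid_bases B) (rankB : has_rank B k.+1).
Implicit Types (G H J K S X : {set 'I_n}).

Lemma generic_indep G J : generic B k G -> J \subset G -> #|J| <= k -> indep B J.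
Proof. by move=> /forallP/(_ J)/implyP genJ /genJ/implyP. Qed.

Lemma core_spec H : [/\ generic B k (core B k H), core B k H \subset H &
  forall G, generic B k G -> G \subset H -> #|G| <= #|core B k H|].
Proof.
have gen0 : generic B k set0.
  apply/forallP => J; rewrite subset0; apply/implyP => /eqP->.
  by rewrite (indep0 matB) implybT.
rewrite /core; case: arg_maxnP => [|C /andP[gC sCH] maxC]; first by rewrite gen0 sub0set.
by split=> // G gG sGH; apply: maxC; rewrite gG sGH.
Qed.

Lemma core_maximal H e : e \in H -> e \notin core B k H ->
  exists2 J : {set 'I_n}, J \subset core B k H & (#|e |: J| <= k) && ~~ indep B (e |: J).
Proof.
move=> eH eC; have [gC sCH maxC] := core_spec H.
have /forallPn[J0] : ~~ generic B k (e |: core B k H).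
  apply/negP => /maxC; rewrite subUset sub1set eH sCH cardsU1 eC /= ltnn.
  by move/(_ isT).
rewrite negb_imply => /andP[sJ0]; rewrite negb_imply => /andP[cJ0 dJ0].
have eJ0 : e \in J0.
  apply/negPn/negP => eJ0; move/negP: dJ0; apply; apply: generic_indep gC _ cJ0.
  apply/subsetP => z zJ0; have := subsetP sJ0 z zJ0.
  by rewrite in_setU1 => /predU1P[ze|//]; rewrite -ze zJ0 in eJ0.
exists (J0 :\ e); last by rewrite setD1K ?cJ0.
apply/subsetP => z /setD1P[ze zJ0].
by have := subsetP sJ0 z zJ0; rewrite in_setU1 (negbTE ze).
Qed.

Lemma basis_not_subset_span S X : indep B S -> #|S| = k -> X \in B ->
  ~~ (X \subset span B S).
Proof.
move=> iS cS XB; apply/negP => sXS.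
have [|e /setDP[eX eS] iSe] := indep_augment matB rankB iS (basis_indep XB).
  by rewrite cS (card_basis rankB XB).
by have := subsetP sXS e eX; rewrite inE (negbTE eS) iSe.
Qed.

Lemma span_subset S S' : indep B S -> #|S| = k -> #|S'| = k ->
  S' \subset span B S -> span B S \subset span B S'.
Proof.
move=> iS cS cS' sS'; apply/subsetP => e eS; rewrite inE.
apply: contraT; rewrite negb_or negbK => /andP[eS' iS'e].
have [|f /setDP[fS'e fS] iSf] := indep_augment matB rankB iS iS'e.
  by rewrite cardsU1 eS' cS cS'.
have : f \in span B S by case/setU1P: fS'e => [-> // | /(subsetP sS')].
by rewrite inE (negbTE fS) iSf.
Qed.

Lemma span_eq S S' : indep B S -> #|S| = k -> indep B S' -> #|S'| = k ->
  S' \subset span B S -> span B S' = span B S.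
Proof.
move=> iS cS iS' cS' sS'; have sSS' := span_subset iS cS cS' sS'.
apply/eqP; rewrite eqEsubset sSS' andbT; apply: span_subset => //.
by apply: subset_trans sSS'; apply/subsetP => e eS; rewrite inE eS.
Qed.

Lemma block_unique K1 K2 S : block B k K1 -> block B k K2 ->
  S \subset K1 -> S \subset K2 -> #|S| = k -> K1 = K2.
Proof.
move=> /existsP[S1 /and3P[iS1 /eqP cS1 /eqP->]] /existsP[S2 /and3P[iS2 /eqP cS2 /eqP->]].
move=> sS1 sS2 cS; have [g1 sub1 _] := core_spec (span B S1).
have [_ sub2 _] := core_spec (span B S2).
have iS : indep B S by apply: generic_indep g1 sS1 _; rewrite cS.
rewrite -(span_eq iS1 cS1 iS cS (subset_trans sS1 sub1)).
by rewrite -(span_eq iS2 cS2 iS cS (subset_trans sS2 sub2)).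
Qed.

Lemma basis_not_subset_block X K : X \in B -> block B k K -> ~~ (X \subset K).
Proof.
move=> XB /existsP[S /and3P[iS /eqP cS /eqP->]]; have [_ sKS _] := core_spec (span B S).
by apply: contraNN (basis_not_subset_span iS cS XB) => /subset_trans; apply.
Qed.

Lemma block_proper K : block B k K -> K \proper setT.
Proof.
move=> bK; case/andP: matB => /set0Pn[X XB] _.
have /subsetPn[e _ eK] := basis_not_subset_block XB bK.
by apply/properP; split; [apply: subsetT | exists e].
Qed.

Lemma basis_paving_of X : X \in B -> X \in paving_of B k.
Proof.
move=> XB; apply/avoid_blocksP; split; first by rewrite (card_basis rankB XB).
by move=> K; apply: basis_not_subset_block.
Qed.

End Hyperplanes.

Section TruncationAndPavingDetermineBases.
Variables (n k : nat) (B1 B2 : {set {set 'I_n}}).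
Hypotheses (matB1 : is_matroid_bases B1) (rankB1 : has_rank B1 k.+1)
           (matB2 : is_matroid_bases B2) (rankB2 : has_rank B2 k.+1)
           (truncE : truncation B1 k = truncation B2 k)
           (pavingE : paving_of B1 k = paving_of B2 k).
Implicit Types (G H J W X Y : {set 'I_n}).

Lemma indep_small_eq J : #|J| <= k -> indep B1 J = indep B2 J.
Proof.
move=> leJk.
by rewrite -(indep_truncation rankB1 (leqnSn k) leJk) truncE (indep_truncation rankB2).
Qed.

Lemma generic_eq G : generic B1 k G = generic B2 k G.
Proof.
apply: eq_forallb => J /=; case leJk : (#|J| <= k); last by rewrite /= !implybT.
by rewrite indep_small_eq.
Qed.

Lemma max_indep_core_spans H W e : W \subset core B2 k H -> indep B1 W ->
  (forall W', W' \subset core B2 k H -> indep B1 W' -> #|W'| <= #|W|) ->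
  e \in H -> e \notin W -> ~~ indep B1 (e |: W).
Proof.
move=> sWG iW maxW eH eW; have [gG _ _] := core_spec k matB2 H.
have [eG | eG] := boolP (e \in core B2 k H).
  apply/negP => iWe; have := maxW _ _ iWe.
  by rewrite subUset sub1set eG sWG cardsU1 eW ltnn => /(_ isT).
have [J sJG /andP[cJe dJe]] := core_maximal matB2 eH eG.
have iJ : indep B1 J.
  rewrite -generic_eq in gG; apply: generic_indep gG sJG _.
  exact: leq_trans (subset_leq_card (subsetUr _ _)) cJe.
have dJe1 : ~~ indep B1 (e |: J) by rewrite indep_small_eq.
exact: (dep_setU1_max matB1 rankB1 sWG iW maxW sJG iJ dJe1 eW).
Qed.

Lemma block_contains_no_basis G Y : block B2 k G -> Y \subset G -> Y \notin B1.
Proof.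
move=> bG sYG; apply/negP => /(basis_paving_of matB1 rankB1).
by rewrite pavingE => /avoid_blocksP[_ /(_ G bG)]; rewrite sYG.
Qed.

Lemma bases_subset_of_truncation_paving : B1 \subset B2.
Proof.
apply/subsetP => X XB1; apply: contraT => XB2.
have cX := card_basis rankB1 XB1.
have dX : ~~ indep B2 X.
  by apply: contraNN XB2 => iX; exact: (indep_card_basis rankB2 iX cX).
have /card_gt0P[x xX] : 0 < #|X| by rewrite cX.
set S := X :\ x.
have cS : #|S| = k by have := cardsD1 x X; rewrite xX cX add1n => -[].
have iS1 : indep B1 S := indepS (subD1set X x) (basis_indep XB1).
have iS2 : indep B2 S by rewrite -indep_small_eq ?cS.
have sXS : X \subset span B2 S.
  apply/subsetP => e eX; rewrite inE in_setD1 eX andbT.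
  by have [-> | //] := eqVneq e x; rewrite /S setD1K // dX orbT.
set G := core B2 k (span B2 S).
have bG : block B2 k G by apply/existsP; exists S; rewrite iS2 cS !eqxx.
have [W /and3P[_ sWG iW] maxW] := max_indep_between (sub0set G) (indep0 matB1).
have ltW : #|W| < #|X|.
  rewrite cX ltn_neqAle (indep_card rankB1 iW) andbT.
  apply: contraNneq (block_contains_no_basis bG sWG) => cW.
  exact: (indep_card_basis rankB1 iW cW).
have [e /setDP[eX eW] iWe] := indep_augment matB1 rankB1 iW (basis_indep XB1) ltW.
have := max_indep_core_spans sWG iW (maxW^~ (sub0set _)) (subsetP sXS e eX) eW.
by rewrite iWe.
Qed.

End TruncationAndPavingDetermineBases.

Theorem lemma4p4 (n r : nat) : 1 <= r -> r <= n ->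
  m_count n r <= m_count n r.-1 * p_count n r.
Proof.
case: r => [//|k] _ lt_k_n /=; rewrite /m_count /p_count -cardsX.
set M := [set B : {set {set 'I_n}} | is_matroid_bases B && has_rank B k.+1].
have injM : {in M &, injective (fun B => (truncation B k, paving_of B k))}.
  move=> B1 B2; rewrite !inE => /andP[mB1 rB1] /andP[mB2 rB2].
  move=> /eqP; rewrite xpair_eqE => /andP[/eqP eT /eqP eP].
  apply/eqP; rewrite eqEsubset (bases_subset_of_truncation_paving mB1 rB1 mB2 rB2 eT eP).
  by rewrite (bases_subset_of_truncation_paving mB2 rB2 mB1 rB1 (esym eT) (esym eP)).
rewrite -(card_in_imset injM); apply/subset_leq_card/subsetP => _ /imsetP[B + ->].
rewrite inE => /andP[mB rB]; rewrite in_setX !inE truncation_rank.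
have uniqB := block_unique mB rB; have properB := block_proper mB rB.
rewrite (truncation_bases mB rB (leqnSn k)) (avoid_blocks_bases uniqB properB lt_k_n).
by rewrite avoid_blocks_rank (avoid_blocks_paving uniqB properB lt_k_n).
Qed.
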